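(* Let $\beta:\mathbb R\to\mathbb R$ be piecewise continuous with $\beta(-t)^2=\beta(t)^2$ for all $t$, and let $\Lambda(t)=\begin{pmatrix}0&1\\-\beta(t)^2&0\end{pmatrix}$. For $s\le t$ let $b(t,s)$ be the real $2\times2$ matrix solving $\frac{\partial}{\partial t}b(t,s)=\Lambda(t)b(t,s)$, $b(s,s)=\mathbb 1$, and set $b(t):=b(t,-t)$ for $t\ge0$. If for some $t\ge0$ one has $\mathrm{Tr}\,b(t)=2$, then $b(t)=\begin{pmatrix}1&0\\-a&1\end{pmatrix}$ for some $a\in\mathbb R$ or $b(t)=\begin{pmatrix}1&\tau\\0&1\end{pmatrix}$ for some $\tau\in\mathbb R$; if $\mathrm{Tr}\,b(t)=-2$, then $b(t)=-\begin{pmatrix}1&0\\-a&1\end{pmatrix}$ for some $a\in\mathbb R$ or $b(t)=-\begin{pmatrix}1&\tau\\0&1\end{pmatrix}$ for some $\tau\in\mathbb R$. *)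

From HB Require Import structures.
From mathcomp Require Import all_boot all_order all_algebra.
From mathcomp Require Import all_classical all_reals all_analysis.
Set Implicit Arguments. Unset Strict Implicit. Unset Printing Implicit Defensive.
Import Order.TTheory GRing.Theory Num.Theory.
Import numFieldNormedType.Exports.
Local Open Scope classical_set_scope.
Local Open Scope ring_scope.

Definition mx2 {R : realType} (a b c d : R) : 'M[R]_2 :=
  \matrix_(i < 2, j < 2)
    if i == 0 :> nat then (if j == 0 :> nat then a else b)
    else (if j == 0 :> nat then c else d).

Definition piecewise_continuous {R : realType} (f : R -> R) : Prop :=
  (forall a c : R, exists D : seq R,
     forall x : R, a <= x <= c -> x \notin D -> {for x, continuous f})
  /\ (forall x : R,
        (exists l : R, f y @[y --> x^'-] --> l) /\
        (exists l : R, f y @[y --> x^'+] --> l)).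

Definition Lambda {R : realType} (beta : R -> R) (t : R) : 'M[R]_2 :=
  mx2 0 1 (- (beta t ^+ 2)) 0.

(* b(., s) is the (continuous, piecewise C^1) solution on [s, +oo) of
   d/dt b(t,s) = Lambda(t) b(t,s), b(s,s) = 1: it is continuous on [s,+oo),
   and differentiable (entrywise) with the prescribed derivative at every
   t > s at which beta is continuous. *)
Definition is_propagator {R : realType} (beta : R -> R)
    (b : R -> R -> 'M[R]_2) : Prop :=
  forall s : R,
    b s s = 1%:M /\
    (forall i j : 'I_2,
       {within `[s, +oo[, continuous (fun u => b u s i j)}) /\
    (forall t : R, s < t -> {for t, continuous beta} ->
       forall i j : 'I_2,
         is_derive t 1 (fun u => b u s i j) ((Lambda beta t *m b t s) i j)).

From HB Require Import structures.
From mathcomp Require Import all_boot all_order all_algebra.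
From mathcomp Require Import all_classical all_reals all_analysis.
From mathcomp Require Import ring lra.
Set Implicit Arguments. Unset Strict Implicit. Unset Printing Implicit Defensive.
Import Order.TTheory GRing.Theory Num.Theory.
Import numFieldNormedType.Exports.
Local Open Scope classical_set_scope.
Local Open Scope ring_scope.

(* Two quantities are conserved along u |-> b(u, s).  The Wronskian
   det b(u, s) is constant because Lambda is trace-free, so det b(t) = 1.
   Since beta(-u)^2 = beta(u)^2, the pairing
   b(-u, -t)_11 b(u, -t)_00 + b(-u, -t)_01 b(u, -t)_10 is constant too; its
   values at u = -t and u = t show that the diagonal entries of b(t) agree.
   A 2x2 matrix with equal diagonal entries, determinant 1 and trace +-2 has
   diagonal +-1 and vanishing product of off-diagonal entries. *)

Section PiecewiseConstant.
Variable R : realType.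

Lemma piecewise_derive0_eq (f : R -> R) (D : seq R) (a c : R) : a <= c ->
  {within `[a, c], continuous f} ->
  (forall x, a < x < c -> x \notin D -> is_derive x 1 f 0) -> f a = f c.
Proof.
elim: D a c => [|d D IH] a c ac fc fd.
  move: ac; rewrite le_eqVlt => /orP[/eqP->//|ac].
  have fd' : forall x, x \in `]a, c[ -> is_derive x 1 f ((fun=> 0) x).
    by move=> x; rewrite in_itv /= => xi; apply: fd.
  have [x _] := MVT ac fd' fc.
  by rewrite mul0r => /eqP; rewrite subr_eq0 => /eqP.
have notin_dD x : x != d -> x \notin D -> x \notin d :: D.
  by move=> xd xD; rewrite in_cons negb_or xd.
have [/andP[ad dc]|nd] := boolP (a < d < c); last first.
  apply: (IH a c ac fc) => x xi xD; apply: fd; rewrite ?notin_dD //.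
  by apply: contraNneq nd => <-.
have sub_ad : `[a, d] `<=` `[a, c].
  by apply: subset_itv; rewrite bnd_simp ?(ltW dc).
have sub_dc : `[d, c] `<=` `[a, c].
  by apply: subset_itv; rewrite bnd_simp ?(ltW ad).
have -> : f a = f d.
  apply: (IH a d (ltW ad) (continuous_subspaceW sub_ad fc)).
  move=> x /andP[ax xd] xD; apply: fd; first by rewrite ax (lt_trans xd dc).
  by rewrite notin_dD ?lt_eqF.
apply: (IH d c (ltW dc) (continuous_subspaceW sub_dc fc)).
move=> x /andP[dx xc] xD; apply: fd; first by rewrite (lt_trans ad dx).
by rewrite notin_dD ?gt_eqF.
Qed.

Lemma within_continuousM (A : set R) (f g : R -> R) :
  {within A, continuous f} -> {within A, continuous g} ->
  {within A, continuous (f * g)}.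
Proof. by move=> cf cg x; apply: cvgM; [exact: cf|exact: cg]. Qed.

Lemma is_derive_compN (f : R -> R) (x df : R) :
  is_derive (- x) 1 f df -> is_derive x 1 (f \o -%R) (- df).
Proof.
move=> fd; have [fdx _] := fd; have [Ndx _] := is_deriveNid x (1 : R).
apply: DeriveDef.
  by apply/derivable1_diffP; apply: differentiable_comp; exact/derivable1_diffP.
rewrite -derive1E derive1_comp // !derive1E derive_val.
by rewrite (@derive_val _ _ _ _ _ _ _ (is_deriveNid x 1)) mulrN1.
Qed.

End PiecewiseConstant.

Section Matrix2.
Variable R : realType.

Lemma mx2_eta (M : 'M[R]_2) : M = mx2 (M 0 0) (M 0 1) (M 1 0) (M 1 1).
Proof.
apply/matrixP => i j; rewrite !mxE.
by case: i => [[|[|?]] ?] //; case: j => [[|[|?]] ?] //=; congr (M _ _); exact/val_inj.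
Qed.

Lemma mx2N (a b c d : R) : - mx2 a b c d = mx2 (- a) (- b) (- c) (- d).
Proof. by apply/matrixP => i j; rewrite !mxE; case: ifP; case: ifP. Qed.

Lemma mxtrace2 (M : 'M[R]_2) : \tr M = M 0 0 + M 1 1.
Proof.
rewrite /mxtrace !big_ord_recl big_ord0 addr0.
by have -> : lift ord0 ord0 = 1 :> 'I_2 by exact/val_inj.
Qed.

Lemma mulmx_LambdaE (beta : R -> R) (u : R) (M : 'M[R]_2) :
  [/\ (Lambda beta u *m M) 0 0 = M 1 0, (Lambda beta u *m M) 0 1 = M 1 1,
      (Lambda beta u *m M) 1 0 = - beta u ^+ 2 * M 0 0
    & (Lambda beta u *m M) 1 1 = - beta u ^+ 2 * M 0 1].
Proof.
rewrite !mxE !big_ord_recl !big_ord0 !mxE /= !mul0r !mul1r !addr0 !add0r.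
by have -> : lift ord0 ord0 = 1 :> 'I_2 by exact/val_inj.
Qed.

Lemma parabolic_mx2 (M : 'M[R]_2) :
  M 0 0 = M 1 1 -> M 0 0 * M 1 1 - M 0 1 * M 1 0 = 1 ->
  (\tr M = 2 ->
     (exists a : R, M = mx2 1 0 (- a) 1) \/ (exists tau : R, M = mx2 1 tau 0 1)) /\
  (\tr M = -2 ->
     (exists a : R, M = - mx2 1 0 (- a) 1) \/ (exists tau : R, M = - mx2 1 tau 0 1)).
Proof.
rewrite mxtrace2; move: (mx2_eta M).
move: (M 0 0 : R) (M 0 1 : R) (M 1 0 : R) (M 1 1 : R) => p q r s -> <- det1.
have offdiag0 : q * r = 0 -> q = 0 \/ r = 0.
  by move/eqP; rewrite mulf_eq0 => /orP[] /eqP; [left|right].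
split=> tr2.
  have -> : p = 1 by lra.
  have [->|->] := offdiag0 ltac:(nra).
    by left; exists (- r); rewrite opprK.
  by right; exists q.
have -> : p = -1 by lra.
have [->|->] := offdiag0 ltac:(nra).
  by left; exists r; rewrite mx2N !opprK oppr0.
by right; exists (- q); rewrite mx2N !opprK oppr0.
Qed.

End Matrix2.

Section Propagator.
Variables (R : realType) (beta : R -> R) (b : R -> R -> 'M[R]_2).
Hypothesis beta_pc : piecewise_continuous beta.
Hypothesis b_prop : is_propagator beta b.

Let entry (s : R) (i j : 'I_2) : R -> R := fun u => b u s i j.

Lemma propagator_continuous (s c : R) (i j : 'I_2) :
  {within `[s, c], continuous (entry s i j)}.
Proof.
have [_ [bc _]] := b_prop s; apply: continuous_subspaceW (bc i j).
by apply: subset_itv; rewrite bnd_simp.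
Qed.

Lemma propagator_derive (s u : R) : s < u -> {for u, continuous beta} ->
  [/\ is_derive u 1 (entry s 0 0) (entry s 1 0 u),
      is_derive u 1 (entry s 0 1) (entry s 1 1 u),
      is_derive u 1 (entry s 1 0) (- beta u ^+ 2 * entry s 0 0 u)
    & is_derive u 1 (entry s 1 1) (- beta u ^+ 2 * entry s 0 1 u)].
Proof.
move=> su cu; have [_ [_ bd]] := b_prop s.
have [e00 e01 e10 e11] := mulmx_LambdaE beta u (b u s).
by rewrite /entry -e00 -e01 -e10 -e11; split; exact: bd.
Qed.

Lemma det_propagator (s c : R) : s <= c ->
  b c s 0 0 * b c s 1 1 - b c s 0 1 * b c s 1 0 = 1.
Proof.
move=> sc; have [D beta_cont] := beta_pc.1 s c.
have [bss _] := b_prop s.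
have : (entry s 0 0 * entry s 1 1 - entry s 0 1 * entry s 1 0) s =
       (entry s 0 0 * entry s 1 1 - entry s 0 1 * entry s 1 0) c.
  apply: (piecewise_derive0_eq (D := D)) => // [|u /andP[su uc] uD].
    by apply: within_continuousB; apply: within_continuousM;
      exact: propagator_continuous.
  have [d00 d01 d10 d11] :=
    propagator_derive su (beta_cont u ltac:(by rewrite !ltW) uD).
  apply: (is_derive_eq (is_deriveB (is_deriveM d00 d11) (is_deriveM d01 d10))).
  rewrite /GRing.scale /=; ring.
by rewrite !fctE /entry bss !mxE /= => <-; ring.
Qed.

Hypothesis beta2_even : forall t : R, beta (- t) ^+ 2 = beta t ^+ 2.

Lemma propagator_diag_eq (t : R) : 0 <= t -> b t (- t) 0 0 = b t (- t) 1 1.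
Proof.
move=> t0; have [D beta_cont] := beta_pc.1 (- t) t.
have [bss _] := b_prop (- t).
pose E := entry (- t).
have : ((E 1 1 \o -%R) * E 0 0 + (E 0 1 \o -%R) * E 1 0) (- t) =
       ((E 1 1 \o -%R) * E 0 0 + (E 0 1 \o -%R) * E 1 0) t.
  apply: (piecewise_derive0_eq (D := D ++ map -%R D)); first lra.
    have cE i j : {within `[- t, t], continuous (E i j)}.
      exact: propagator_continuous.
    have cNE i j : {within `[- t, t], continuous (E i j \o -%R)}.
      by apply: within_continuous_compN; rewrite opprK.
    by apply: within_continuousD; apply: within_continuousM.
  move=> u /andP[tu ut]; rewrite mem_cat negb_or => /andP[uD NuD].
  have NuD' : - u \notin D.
    by apply: contra NuD => ?; apply/mapP; exists (- u); rewrite ?opprK.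
  have [d00 _ d10 _] := propagator_derive tu (beta_cont u ltac:(by rewrite !ltW) uD).
  have tNu : - t < - u by lra.
  have [_ d01 _ d11] :=
    propagator_derive tNu (beta_cont (- u) ltac:(apply/andP; split; lra) NuD').
  have dN01 := is_derive_compN d01; have dN11 := is_derive_compN d11.
  apply: (is_derive_eq (is_deriveD (is_deriveM dN11 d00) (is_deriveM dN01 d10))).
  rewrite /GRing.scale /= beta2_even; ring.
by rewrite !fctE /E /entry opprK bss !mxE /= mulr1 mulr0 mul1r mul0r !addr0 => ->.
Qed.

End Propagator.

Theorem proposition4 (R : realType) (beta : R -> R) (b : R -> R -> 'M[R]_2)
  (hpc : piecewise_continuous beta)
  (hsym : forall t : R, beta (- t) ^+ 2 = beta t ^+ 2)
  (hb : is_propagator beta b)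
  (t : R) (ht : 0 <= t) :
  (\tr (b t (- t)) = 2 ->
     (exists a : R, b t (- t) = mx2 1 0 (- a) 1) \/
     (exists tau : R, b t (- t) = mx2 1 tau 0 1)) /\
  (\tr (b t (- t)) = -2 ->
     (exists a : R, b t (- t) = - mx2 1 0 (- a) 1) \/
     (exists tau : R, b t (- t) = - mx2 1 tau 0 1)).
Proof.
apply: parabolic_mx2; first exact: propagator_diag_eq hpc hb hsym t ht.
by apply: det_propagator hpc hb _ _ _; lra.
Qed.
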